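(* Let $X$ be a Banach space as described in the context and let $f\in X$ be a function that is not a polynomial. If there exists a sequence $p_n\in\mathcal{P}_n[\mathbb{Z}]$ with $\lim_{n\to\infty}\|f-p_n\|=0$, then $\liminf_{n\to\infty}\|z^n\|=0$.
   Context: $\mathbb{D}=\{z\in\mathbb{C}:|z|<1\}$. $X$ is a complex Banach space of functions analytic in $\mathbb{D}$ whose norm $\|\cdot\|$ satisfies: (i) $\|f(\cdot\, e^{it})\|=\|f(\cdot)\|$ for all $t\in\mathbb{R}$ and $f\in X$; (ii) $\|f\|<\infty$ for every entire function $f$; (iii) for all $f\in X$ and $g\in L[0,2\pi]$, $\big\|\frac{1}{2\pi}\int_0^{2\pi} f(ze^{it})g(t)\,dt\big\|\le \frac{1}{2\pi}\int_0^{2\pi}|g(t)|\,dt\cdot\|f\|$. $\|z^n\|$ is the norm in $X$ of $z\mapsto z^n$. A complex number is called an integer if its real and imaginary parts are integers; $\mathcal{P}_n[\mathbb{Z}]$ is the set of complex polynomials of degree at most $n-1$ with integer coefficients in this sense. *)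

From mathcomp Require Import all_boot all_order all_algebra.
From mathcomp Require Import all_classical all_reals all_analysis.
From mathcomp Require Import complex.
Import Order.TTheory GRing.Theory Num.Theory.
Import numFieldNormedType.Exports.
Local Open Scope classical_set_scope.
Local Open Scope ring_scope.
Local Open Scope complex_scope.

Set Implicit Arguments.
Unset Strict Implicit.
Unset Printing Implicit Defensive.

Definition analytic_in_D (R : realType) (f : R[i] -> R[i]) : Prop :=
  forall z : R[i], `|z| < 1 -> derivable (f : R[i]^o -> R[i]^o) z 1.

Definition entire (R : realType) (f : R[i] -> R[i]) : Prop :=
  forall z : R[i], derivable (f : R[i]^o -> R[i]^o) z 1.

Definition expi (R : realType) (t : R) : R[i] := cos t +i* sin t.

Definition cabs (R : realType) (c : R[i]) : R := complex.Re `|c|.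

Definition cintegral (R : realType) (F : R -> R[i]) (a b : R) : R[i] :=
  Rintegral (@lebesgue_measure R) `[a, b] (fun t => complex.Re (F t)) +i*
  Rintegral (@lebesgue_measure R) `[a, b] (fun t => complex.Im (F t)).

Definition L1_02pi (R : realType) (g : R -> R[i]) : Prop :=
  (@lebesgue_measure R).-integrable `[0, 2 * pi] (EFin \o (fun t => complex.Re (g t))) /\
  (@lebesgue_measure R).-integrable `[0, 2 * pi] (EFin \o (fun t => complex.Im (g t))).

(* The space X is given by its norm N, defined on functions C -> C with values in
   [0, +oo]; X = analytic functions in D with finite norm. *)
Definition inX (R : realType) (N : (R[i] -> R[i]) -> \bar R) (f : R[i] -> R[i]) : Prop :=
  analytic_in_D f /\ (N f < +oo)%E.

Definition banach_of_analytic (R : realType) (N : (R[i] -> R[i]) -> \bar R) : Prop :=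
  (forall f g : R[i] -> R[i], (forall z, `|z| < 1 -> f z = g z) -> N f = N g) /\
  [/\ (forall f, inX N f -> (0 <= N f)%E),
      (forall f, inX N f -> N f = 0%E -> forall z, `|z| < 1 -> f z = 0),
      (forall f (c : R[i]), inX N f -> N (fun z => c * f z) = ((cabs c)%:E * N f)%E),
      (forall f g, inX N f -> inX N g -> (N (fun z => (f z + g z)%R) <= N f + N g)%E) &
      (forall u : nat -> R[i] -> R[i], (forall n, inX N (u n)) ->
         (forall e : R, 0 < e -> exists M : nat, forall m n, (M <= m)%N -> (M <= n)%N ->
            (N (fun z => (u m z - u n z)%R) < e%:E)%E) ->
         exists f, inX N f /\ (fun n => N (fun z => (u n z - f z)%R)) @ \oo --> 0%E)].

Definition X_axioms (R : realType) (N : (R[i] -> R[i]) -> \bar R) : Prop :=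
  [/\ banach_of_analytic N,
      (* (i) rotation invariance *)
      (forall f (t : R), inX N f -> N (fun z => f (z * expi t)) = N f),
      (* (ii) entire functions have finite norm *)
      (forall f, entire f -> (N f < +oo)%E) &
      (* (iii) convolution inequality *)
      (forall f (g : R -> R[i]), inX N f -> L1_02pi g ->
         let h := fun z => (2 * pi)^-1%:C * cintegral (fun t => f (z * expi t) * g t) 0 (2 * pi) in
         inX N h /\
         (N h <= ((2 * pi)^-1 * Rintegral (@lebesgue_measure R) `[0, 2 * pi] (fun t => cabs (g t)))%:E
                 * N f)%E)].

Definition is_polynomial_on_D (R : realType) (f : R[i] -> R[i]) : Prop :=
  exists q : {poly R[i]}, forall z, `|z| < 1 -> f z = q.[z].

Definition gauss_int (R : realType) (c : R[i]) : bool :=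
  (complex.Re c \is a Num.int) && (complex.Im c \is a Num.int).

(* P_n[Z]: polynomials of degree at most n-1 with Gaussian-integer coefficients *)
Definition PnZ (R : realType) (n : nat) (p : {poly R[i]}) : Prop :=
  (size p <= n)%N /\ forall k : nat, gauss_int p`_k.

From mathcomp Require Import all_boot all_order all_algebra.
From mathcomp Require Import all_classical all_reals all_analysis.
From mathcomp Require Import complex.
From mathcomp Require Import ring lra zify.
Import Order.TTheory GRing.Theory Num.Theory.
Import numFieldNormedType.Exports.
Local Open Scope classical_set_scope.
Local Open Scope ring_scope.
Local Open Scope complex_scope.

Set Implicit Arguments.
Unset Strict Implicit.
Unset Printing Implicit Defensive.

(* Averaging [q(w^r z)] against the character [w^(-rk)] over the m-th roots of
   unity [w^r] isolates the monomial [q_k z^k]; by rotation invariance (i) and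
   the triangle inequality this gives [|q_k| ||z^k|| <= ||q||].  If [||z^n||]
   stayed above some [d > 0], then for large [n, m] the polynomial [p_n - p_m]
   would have norm [< d], hence Gaussian-integer coefficients of modulus [< 1],
   hence vanish: the [p_n] would be eventually constant and [f] would be their
   common value on the disc. *)

Section PrimitiveRootSums.
Variables (F : idomainType) (m : nat) (w : F).
Hypothesis w_prim : m.-primitive_root w.

Lemma sum_prim_root_expr j :
  \sum_(r < m) (w ^+ j) ^+ r = if (m %| j)%N then m%:R else 0.
Proof.
case: ifP => [|/negbT]; rewrite (prim_order_dvd w_prim) => wj.
  by rewrite (eqP wj) (eq_bigr (fun=> 1)) ?sumr_const ?card_ord // => r; rewrite expr1n.
have := subrX1 (w ^+ j) m.
rewrite -exprM mulnC exprM (prim_expr_order w_prim) expr1n subrr => /esym/eqP.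
by rewrite mulf_eq0 subr_eq0 (negbTE wj) => /eqP.
Qed.

Lemma horner_prim_root_average (q : {poly F}) k z :
  (size q <= m)%N -> (k < m)%N ->
  \sum_(r < m) w ^+ (r * (m - k)) * q.[w ^+ r * z] = m%:R * q`_k * z ^+ k.
Proof.
move=> qm km.
have dvd_shift j : (j < m)%N -> (m %| m - k + j)%N = (j == k).
  move=> jm; apply/idP/eqP => [/dvdnP[[|[|c]] hc]|->]; [lia|lia|nia|].
  by rewrite subnK ?dvdnn // ltnW.
have term r j : w ^+ (r * (m - k)) * (q`_j * (w ^+ r * z) ^+ j) =
    q`_j * z ^+ j * (w ^+ (m - k + j)) ^+ r.
  rewrite exprMn -!exprM mulnDl exprD [((m - k) * r)%N]mulnC [(j * r)%N]mulnC.
  by set a := w ^+ (r * (m - k)); set b := w ^+ (r * j); ring.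
under eq_bigr => r _ do rewrite (horner_coef_wide _ qm) mulr_sumr.
rewrite exchange_big /=.
under eq_bigr => j _ do under eq_bigr => r _ do rewrite term.
under eq_bigr => j _ do rewrite -mulr_sumr sum_prim_root_expr dvd_shift //.
rewrite (bigD1 (Ordinal km)) //= eqxx big1 ?addr0; first by ring.
by move=> j /negbTE; rewrite -val_eqE /= => ->; rewrite mulr0.
Qed.

End PrimitiveRootSums.

Section ComplexFacts.
Variable R : realType.
Implicit Types (t : R) (z : R[i]).

Lemma derivable_horner (p : {poly R[i]}) z :
  derivable ((fun x => p.[x]) : R[i]^o -> R[i]^o) z 1.
Proof.
elim/poly_ind: p => [|p c ih].
  have -> : (fun x : R[i]^o => (0 : {poly R[i]}).[x]) = cst 0.
    by apply/funext => x; rewrite horner0.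
  exact: derivable_cst.
have -> : (fun x : R[i]^o => (p * 'X + c%:P).[x]) =
    ((fun x : R[i]^o => p.[x]) * (@id R[i]^o)) + cst c.
  by apply/funext => x; rewrite !hornerE.
apply: derivableD; last exact: derivable_cst.
exact: (@derivableM R[i] R[i]^o _ id (z : R[i]^o) 1 ih (@derivable_id _ _ _ _)).
Qed.

Lemma expiD t1 t2 : expi t1 * expi t2 = expi (t1 + t2).
Proof. by rewrite /expi cosD sinD; simpc; congr (_ +i* _); ring. Qed.

Lemma expiX t n : expi t ^+ n = expi (n%:R * t).
Proof.
elim: n => [|n ih]; first by rewrite expr0 mul0r /expi cos0 sin0.
by rewrite exprSr ih expiD mulrSr mulrDl mul1r.
Qed.

Lemma expi_neq1 t : 0 < t < pi *+ 2 -> expi t != 1.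
Proof.
move=> /andP[t0 t2pi]; apply/negP => /eqP[cos1 sin0].
have [tpi|tpi|tpi] := ltgtP t pi.
- by have := @sin_gt0_pi _ t; rewrite t0 tpi sin0 ltxx => /(_ isT).
- have := @sin_gt0_pi _ (t - pi); rewrite subr_gt0 tpi ltrBlDr -mulr2n t2pi.
  by rewrite -[sin _]opprK -sinDpi subrK sin0 oppr0 ltxx => /(_ isT).
- by move: cos1; rewrite tpi cospi; lra.
Qed.

Lemma expi_prim_root m : (0 < m)%N -> m.-primitive_root (expi (pi *+ 2 / m%:R : R)).
Proof.
move=> m0; set w := expi _.
have wX n : w ^+ n = expi (pi *+ 2 * (n%:R / m%:R)).
  by rewrite expiX; congr expi; rewrite mulrCA mulrA.
have wm : w ^+ m = 1.
  by rewrite wX divff ?pnatr_eq0 -?lt0n // mulr1 /expi cos2pi sin2pi.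
have [d prim_d dm] := prim_order_exists m0 wm.
suff -> : m = d by [].
apply/eqP; rewrite eqn_leq (dvdn_leq m0 dm) andbT leqNgt; apply/negP => dltm.
have d0 := prim_order_gt0 prim_d.
suff : 0 < (pi *+ 2 : R) * (d%:R / m%:R) < pi *+ 2.
  by move=> t_range; have := expi_neq1 t_range; rewrite -wX (prim_expr_order prim_d) eqxx.
have pi2 : (0 : R) < pi *+ 2 by rewrite mulrn_wgt0 ?pi_gt0.
rewrite pmulr_rgt0 // gtr_pMr // divr_gt0 ?ltr0n //=.
by rewrite ltr_pdivrMr ?ltr0n // mul1r ltr_nat.
Qed.

Lemma cabsE z : `|z| = (cabs z)%:C.
Proof. by rewrite /cabs normc_def. Qed.

Lemma cabsM z1 z2 : cabs (z1 * z2) = cabs z1 * cabs z2.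
Proof. by apply: complexI; rewrite rmorphM -!cabsE normrM. Qed.

Lemma cabs0 : cabs (0 : R[i]) = 0.
Proof. by rewrite /cabs normr0. Qed.

Lemma cabsN1 : cabs (-1 : R[i]) = 1.
Proof. by apply: complexI; rewrite -cabsE normrN1. Qed.

Lemma cabs_nat n : cabs (n%:R : R[i]) = n%:R.
Proof. by apply: complexI; rewrite -cabsE normr_nat rmorph_nat. Qed.

Lemma cabs_expi t : cabs (expi t) = 1.
Proof. by rewrite /cabs normc_def /= cos2Dsin2 sqrtr1. Qed.

Lemma Re_le_cabs z : `|complex.Re z| <= cabs z.
Proof.
rewrite /cabs normc_def /= -sqrtr_sqr ler_sqrt ?lerDl ?sqr_ge0 //.
by rewrite addr_ge0 ?sqr_ge0.
Qed.

Lemma Im_le_cabs z : `|complex.Im z| <= cabs z.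
Proof.
rewrite /cabs normc_def /= -sqrtr_sqr ler_sqrt ?lerDr ?sqr_ge0 //.
by rewrite addr_ge0 ?sqr_ge0.
Qed.

Lemma gauss_intB z1 z2 : gauss_int z1 -> gauss_int z2 -> gauss_int (z1 - z2).
Proof. by case: z1 z2 => [x1 y1] [x2 y2] /andP[? ?] /andP[? ?]; rewrite /gauss_int !rpredB. Qed.

Lemma gauss_int_eq0 z : gauss_int z -> cabs z < 1 -> z = 0.
Proof.
have int_eq0 (x : R) : x \is a Num.int -> `|x| < 1 -> x = 0.
  by move=> xint; apply: contraTeq => /(norm_intr_ge1 xint); rewrite leNgt.
case: z => x y /andP[xint yint] z1.
have /= -> := int_eq0 _ xint (le_lt_trans (Re_le_cabs _) z1).
by have /= -> := int_eq0 _ yint (le_lt_trans (Im_le_cabs _) z1).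
Qed.

End ComplexFacts.

Lemma lb_pos_of_eventually_ge (F : realDomainType) (c : nat -> F) K e :
  (forall k, 0 < c k) -> 0 < e -> (forall k, (K <= k)%N -> e <= c k) ->
  exists2 d, 0 < d & forall k, d <= c k.
Proof.
move=> c_gt0; elim: K e => [|K ih] e e0 ce; first by exists e => // k; apply: ce.
apply: (ih (Num.min e (c K))); first by rewrite lt_min e0 c_gt0.
move=> k; rewrite leq_eqVlt => /orP[/eqP <-|Kk]; first by rewrite ge_min lexx orbT.
by rewrite ge_min ce.
Qed.

Lemma cvge0_lt (R : realType) (u : nat -> \bar R) e : u @ \oo --> 0%E -> 0 < e ->
  exists M, forall n, (M <= n)%N -> (u n < e%:E)%E.
Proof.
move=> /fine_cvgP[[M1 _ u_fin] u_cvg] e0.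
have [M2 _ u_close] := (cvgrPdist_lt _ _).1 u_cvg e e0.
exists (maxn M1 M2) => n; rewrite geq_max => /andP[M1n M2n].
move: (u_close n M2n) => /=; rewrite sub0r normrN => un.
by rewrite -(fineK (u_fin n M1n)) lte_fin (le_lt_trans (ler_norm _) un).
Qed.

Lemma limn_einf_eq0 (R : realType) (u : nat -> \bar R) : (forall n, 0 <= u n)%E ->
  (forall K (e : R), 0 < e -> exists2 k, (K <= k)%N & (u k < e%:E)%E) ->
  limn_einf u = 0%E.
Proof.
move=> u0 small; rewrite limn_einf_lim (cvg_lim _ (@cvg_einfs_sup R u)) //.
apply/eqP; rewrite eq_le; apply/andP; split.
  apply: ge_ereal_sup => _ [n _ <-]; apply/lee_addgt0Pr => e e0; rewrite add0e.
  have [k nk uk] := small n e e0.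
  by apply: le_trans (ltW uk); apply: ereal_inf_lbound; exists k.
apply: (@le_trans _ _ (einfs u 0)); last by apply: ereal_sup_ubound; exists 0%N.
by apply/ereal_infP => _ [k _ <-].
Qed.

Section NormOnPolynomials.
Variables (R : realType) (N : (R[i] -> R[i]) -> \bar R).
Hypothesis ax : X_axioms N.
Implicit Types (f g : R[i] -> R[i]) (p q : {poly R[i]}).

Let N_ge0 f : inX N f -> (0 <= N f)%E.
Proof. by case: ax => -[_ [Nge0 _ _ _ _]] _ _ _; apply: Nge0. Qed.

Let N_eq0 f : inX N f -> N f = 0%E -> forall z, `|z| < 1 -> f z = 0.
Proof. by case: ax => -[_ [_ Neq0 _ _ _]] _ _ _; apply: Neq0. Qed.

Let N_scale f c : inX N f -> N (fun z => c * f z) = ((cabs c)%:E * N f)%E.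
Proof. by case: ax => -[_ [_ _ Nscale _ _]] _ _ _; apply: Nscale. Qed.

Let N_triangle f g : inX N f -> inX N g -> (N (fun z => (f z + g z)%R) <= N f + N g)%E.
Proof. by case: ax => -[_ [_ _ _ Ntriangle _]] _ _ _; apply: Ntriangle. Qed.

Let N_rot f t : inX N f -> N (fun z => f (z * expi t)) = N f.
Proof. by case: ax => _ Nrot _ _; apply: Nrot. Qed.

Lemma inX_poly q : inX N (fun z => q.[z]).
Proof.
case: ax => _ _ N_entire _; split; first by move=> z _; apply: derivable_horner.
by apply: N_entire => z; apply: derivable_horner.
Qed.

Lemma inX_add f g : inX N f -> inX N g -> inX N (fun z => f z + g z).
Proof.
move=> [f_an f_fin] [g_an g_fin]; split.
  by move=> z zD; apply: (@derivableD R[i] R[i]^o R[i]^o f g (z : R[i]^o)); auto.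
by apply: le_lt_trans (N_triangle _ _) _; rewrite ?lte_add_pinfty //; split.
Qed.

Lemma inX_scale c f : inX N f -> inX N (fun z => c * f z).
Proof.
move=> Xf; have [f_an f_fin] := Xf; split.
  move=> z zD; apply: (@derivableM R[i] R[i]^o (cst c) f (z : R[i]^o)); last exact: f_an.
  exact: derivable_cst.
rewrite N_scale // -(@fineK _ (N f)) ?ge0_fin_numE ?N_ge0 //.
by rewrite -EFinM ltry.
Qed.

Lemma N_subr_le f g : inX N f -> inX N g -> (N (fun z => (f z - g z)%R) <= N f + N g)%E.
Proof.
move=> Xf Xg; have -> : (fun z => f z - g z) = (fun z => f z + (-1) * g z).
  by apply/funext => z; rewrite mulN1r.
by rewrite -[N g]mul1e -cabsN1 -N_scale //; apply/N_triangle/inX_scale.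
Qed.

Lemma inX_sub f g : inX N f -> inX N g -> inX N (fun z => f z - g z).
Proof.
move=> Xf Xg; have -> : (fun z => f z - g z) = (fun z => f z + (-1) * g z).
  by apply/funext => z; rewrite mulN1r.
exact/inX_add/inX_scale.
Qed.

Definition np q := fine (N (fun z => q.[z])).

Lemma npE q : N (fun z => q.[z]) = (np q)%:E.
Proof. by rewrite fineK // ge0_fin_numE; [case: (inX_poly q)|apply/N_ge0/inX_poly]. Qed.

Lemma np_ge0 q : 0 <= np q.
Proof. by rewrite -lee_fin -npE; apply/N_ge0/inX_poly. Qed.

Lemma np_ext p q : (forall z, p.[z] = q.[z]) -> np p = np q.
Proof. by move=> pq; rewrite /np; congr (fine (N _)); apply/funext. Qed.

Lemma npD p q : np (p + q) <= np p + np q.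
Proof.
rewrite -lee_fin EFinD -!npE (_ : (fun z => _) = (fun z => p.[z] + q.[z])).
  by apply: N_triangle; apply: inX_poly.
by apply/funext => z; rewrite hornerD.
Qed.

Lemma npZ c q : np (c *: q) = cabs c * np q.
Proof.
apply: EFin_inj; rewrite EFinM -!npE -N_scale; last exact: inX_poly.
by congr N; apply/funext => z; rewrite hornerZ.
Qed.

Lemma np_sum n (P : nat -> {poly R[i]}) :
  np (\sum_(r < n) P r) <= \sum_(r < n) np (P r).
Proof.
elim: n => [|n ih].
  by rewrite !big_ord0 -(scale0r (0 : {poly R[i]})) npZ cabs0 mul0r.
by rewrite !big_ord_recr /=; apply: le_trans (npD _ _) _; rewrite lerD2r.
Qed.

Lemma np_comp_rot q t : np (q \Po (expi t *: 'X)) = np q.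
Proof.
rewrite /np -(N_rot t (inX_poly q)); congr (fine (N _)); apply/funext => z.
by rewrite horner_comp hornerZ hornerX mulrC.
Qed.

Lemma np_Xn_gt0 k : 0 < np 'X^k.
Proof.
rewrite lt_neqAle np_ge0 andbT; apply/eqP => npX0.
have half_in_D : `|(2^-1 : R)%:C| < 1.
  rewrite cabsE ltcR /cabs normc_def /= expr0n addr0 sqrtr_sqr /=.
  by rewrite ger0_norm ?invr_ge0 ?ler0n // invf_lt1 ?ltr0n // ltr1n.
have := N_eq0 (inX_poly 'X^k); rewrite npE -npX0 => /(_ erefl _ half_in_D).
rewrite hornerXn => /eqP; rewrite expf_eq0 => /andP[_].
by rewrite eq_complex /= invr_eq0 pnatr_eq0.
Qed.

Lemma np_coef_le q k : cabs q`_k * np 'X^k <= np q.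
Proof.
pose m := maxn (size q) k.+1.
have [m0 qm km] : [/\ (0 < m)%N, (size q <= m)%N & (k < m)%N] by rewrite /m; split; lia.
have w_prim := expi_prim_root R m0; set w := expi _ in w_prim.
have wX r : w ^+ r = expi (r%:R * (pi *+ 2 / m%:R)) by apply: expiX.
pose A := \sum_(r < m) w ^+ (r * (m - k)) *: (q \Po (w ^+ r *: 'X)).
have npA_le : np A <= m%:R * np q.
  apply: le_trans (np_sum m (fun r => w ^+ (r * (m - k)) *: (q \Po (w ^+ r *: 'X)))) _.
  apply: (@le_trans _ _ (\sum_(r < m) np q)); last by rewrite sumr_const card_ord mulr_natl.
  by apply: ler_sum => r _; rewrite npZ !wX cabs_expi mul1r np_comp_rot.
have A_monomial z : A.[z] = ((m%:R * q`_k) *: 'X^k).[z].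
  rewrite horner_sum hornerZ hornerXn -(horner_prim_root_average w_prim _ qm km).
  by apply: eq_bigr => r _; rewrite hornerZ horner_comp hornerZ hornerX.
move: npA_le; rewrite (np_ext A_monomial) npZ cabsM cabs_nat -mulrA.
by rewrite ler_pM2l // ltr0n.
Qed.

Lemma gauss_poly_eq p q d : (forall k, gauss_int p`_k) -> (forall k, gauss_int q`_k) ->
  (forall k, d <= np 'X^k) -> np (p - q) < d -> p = q.
Proof.
move=> p_int q_int d_le pq_lt; apply/eqP; rewrite -subr_eq0; apply/eqP/polyP => k.
rewrite coef0; apply: gauss_int_eq0; first by rewrite coefB gauss_intB.
rewrite ltNge; apply/negP => ck_ge1.
have := np_coef_le (p - q) k; have := d_le k; have := np_ge0 'X^k.
have : np 'X^k <= cabs (p - q)`_k * np 'X^k by rewrite ler_peMl ?np_ge0.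
lra.
Qed.

Section Approximation.
Variables (f : R[i] -> R[i]) (p : nat -> {poly R[i]}).
Hypotheses (Xf : inX N f) (p_int : forall n k, gauss_int (p n)`_k).
Hypothesis p_cvg : (fun n => N (fun z => f z - (p n).[z])) @ \oo --> 0%E.

Lemma approx_eventually_const d : 0 < d -> (forall k, d <= np 'X^k) ->
  exists M, forall n, (M <= n)%N -> p n = p M.
Proof.
move=> d0 d_le; have [M p_close] := cvge0_lt p_cvg (divr_gt0 d0 (ltr0n _ 2)).
exists M => n Mn; apply: (@gauss_poly_eq _ _ d) => //.
rewrite -lte_fin -npE (splitr d) EFinD.
have -> : (fun z => (p n - p M).[z]) =
    (fun z => (f z - (p M).[z]) - (f z - (p n).[z])).
  by apply/funext => z; rewrite hornerD hornerN; ring.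
apply: le_lt_trans (N_subr_le _ _) _; try exact/inX_sub/inX_poly.
by apply: lteD; apply: p_close.
Qed.

Lemma limit_of_eventually_const M : (forall n, (M <= n)%N -> p n = p M) ->
  is_polynomial_on_D f.
Proof.
move=> p_const; exists (p M) => z zD; apply/eqP; rewrite -subr_eq0; apply/eqP.
apply: (N_eq0 (inX_sub Xf (inX_poly _))) zD; apply/eqP.
rewrite eq_le N_ge0 ?andbT; last exact/inX_sub/inX_poly.
apply/lee_addgt0Pr => e e0; rewrite add0e.
have [M' p_close] := cvge0_lt p_cvg e0.
have := p_close (maxn M M') (leq_maxr _ _).
by rewrite p_const ?leq_maxl // => /ltW.
Qed.

End Approximation.

End NormOnPolynomials.

Theorem theorem5p4 (R : realType) (N : (R[i] -> R[i]) -> \bar R) :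
  X_axioms N ->
  forall f : R[i] -> R[i], inX N f -> ~ is_polynomial_on_D f ->
  forall p : nat -> {poly R[i]}, (forall n, PnZ n (p n)) ->
  (fun n => N (fun z => f z - (p n).[z])) @ \oo --> 0%E ->
  limn_einf (fun n => N (fun z => z ^+ n)) = 0%E.
Proof.
move=> ax f Xf f_nonpoly p p_PnZ p_cvg.
have p_int n k : gauss_int (p n)`_k by case: (p_PnZ n).
have XnE n : N (fun z => z ^+ n) = (np N 'X^n)%:E.
  by rewrite -npE //; congr N; apply/funext => z; rewrite hornerXn.
apply: limn_einf_eq0 => [n|K e e0]; first by rewrite XnE lee_fin np_ge0.
apply: contrapT => no_small; apply: f_nonpoly.
have [d d0 d_le] : exists2 d, 0 < d & forall k, d <= np N 'X^k.
  apply: (@lb_pos_of_eventually_ge _ _ K e) => // [k|k Kk]; first exact: np_Xn_gt0.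
  rewrite leNgt -lte_fin -XnE; apply/negP => small.
  by apply: no_small; exists k.
have [M p_const] := approx_eventually_const ax Xf p_int p_cvg d0 d_le.
by apply: (limit_of_eventually_const ax) p_const.
Qed.
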